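(* Let $k\ge1$ and let $A_k$ be the matrix defined below. The reduced Gröbner basis of the toric ideal $I_{A_k}$ with respect to the lexicographic term ordering $\prec_{\mathrm{lex}}$ is $\{\mathbf{x}^{\mathbf{u}^+}-\mathbf{x}^{\mathbf{u}^-}:\mathbf{u}\in\mathcal{R}\}$, where $\mathcal{R}$ consists of the vector $(\mathbf{0}_k,\mathbf{1}_k,\mathbf{0}_k,-\mathbf{1}_k,1,-1)^{\mathsf T}$ together with the vectors $(\mathbf{e}_i,-\mathbf{e}_i,\mathbf{0}_k,\mathbf{0}_k,0,0)^{\mathsf T}$ and $(\mathbf{0}_k,\mathbf{0}_k,\mathbf{e}_i,-\mathbf{e}_i,0,0)^{\mathsf T}$ for $i\in[k]$ (here $\mathbf{e}_i$ are the standard unit vectors of $\mathbb{Z}^k$).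
   Context: $I_k$ is the $k\times k$ identity, $\mathbf{1}_k$ the all-ones and $\mathbf{0}_k$ the zero vector in $\mathbb{Z}^k$. Define $$A_k=\begin{pmatrix} I_k & I_k & 0 & 0 & -\mathbf{1}_k & \mathbf{0}\\ 0&0&I_k&I_k&\mathbf{0}&-\mathbf{1}_k\\ 0&0&0&0&1&1\end{pmatrix}\in\mathbb{Z}^{(2k+1)\times(4k+2)}$$ (zero blocks of appropriate sizes; last two columns are single columns). The toric ideal of $A\in\mathbb{Z}^{d\times n}$ is $I_A=\langle\mathbf{x}^{\mathbf{u}^+}-\mathbf{x}^{\mathbf{u}^-}:\mathbf{u}\in\ker(A)\cap\mathbb{Z}^n\rangle\subset K[x_1,\dots,x_n]$, with $\mathbf{u}^+,\mathbf{u}^-\in\mathbb{Z}^n_{\ge0}$ the positive and negative parts of $\mathbf{u}$. The lexicographic order on monomials (identified with exponent vectors in $\mathbb{Z}^n_{\ge0}$): $\mathbf{u}\prec_{\mathrm{lex}}\mathbf{v}$ iff $u_i<v_i$ for the smallest index $i$ with $u_i\neq v_i$. *)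

From HB Require Import structures.
From mathcomp Require Import all_boot all_order all_algebra.
From mathcomp Require Import mpoly.
Set Implicit Arguments. Unset Strict Implicit. Unset Printing Implicit Defensive.
Import Order.TTheory GRing.Theory Num.Theory.
Local Open Scope ring_scope.

(* Number of variables/columns: 4k+2.  Indices are 0-based: variable x_{j+1}
   of the paper is index j : 'I_(ncols k). *)
Definition ncols (k : nat) : nat := (4 * k).+2.

Definition Amat (k : nat) : 'M[int]_((2 * k).+1, ncols k) :=
  \matrix_(i, j)
    (if (j < 4 * k)%N then
       (if (j < 2 * k)%N then
          (if ((i < k)%N && (j %% k == nat_of_ord i)%N) then 1 else 0)
        else
          (if ((k <= i)%N && (i < 2 * k)%N && ((j %% k)%N == (i - k)%N)) then 1 else 0))
     else if (nat_of_ord j == 4 * k)%N then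
       (if (i < k)%N then -1 else if (nat_of_ord i == 2 * k)%N then 1 else 0)
     else
       (if ((k <= i)%N && (i < 2 * k)%N) then -1 else if (nat_of_ord i == 2 * k)%N then 1 else 0)).

Definition upos (n : nat) (u : 'cV[int]_n) : 'X_{1..n} :=
  [multinom (if (0 <= u i ord0)%R then absz (u i ord0) else 0) | i < n].
Definition uneg (n : nat) (u : 'cV[int]_n) : 'X_{1..n} :=
  [multinom (if (u i ord0 <= 0)%R then absz (u i ord0) else 0) | i < n].

Definition binom (K : fieldType) (n : nat) (u : 'cV[int]_n) : {mpoly K[n]} :=
  'X_[upos u] - 'X_[uneg u].

Definition toric_ideal (K : fieldType) (d n : nat) (A : 'M[int]_(d, n))
    (f : {mpoly K[n]}) : Prop :=
  exists s : seq ({mpoly K[n]} * 'cV[int]_n),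
    (forall p, p \in s -> A *m p.2 = 0) /\
    f = \sum_(p <- s) p.1 * @binom K _ p.2.

Definition lexlt (n : nat) (m m' : 'X_{1..n}) : bool :=
  [exists i : 'I_n, (m i < m' i)%N &&
     [forall j : 'I_n, (j < i)%N ==> (m j == m' j)]].

(* leading monomial w.r.t. lex (the lex-largest monomial in the support;
   0 for the zero polynomial) *)
Definition lexmax (n : nat) (m m' : 'X_{1..n}) : 'X_{1..n} :=
  if lexlt m m' then m' else m.
Definition lm (K : fieldType) (n : nat) (p : {mpoly K[n]}) : 'X_{1..n} :=
  foldr (@lexmax n) 0%MM (msupp p).

Definition mdivides (n : nat) (m m' : 'X_{1..n}) : bool :=
  [forall i : 'I_n, (m i <= m' i)%N].

Definition is_reduced_lex_GB (K : fieldType) (n : nat)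
    (I : {mpoly K[n]} -> Prop) (G : seq {mpoly K[n]}) : Prop :=
  [/\ (forall g, g \in G -> I g),
      (forall f, I f -> f != 0 ->
         exists2 g, g \in G & mdivides (lm g) (lm f)),
      (forall g, g \in G -> g != 0 /\ g@_(lm g) = 1) &
      (forall g g' m, g \in G -> g' \in G -> g' != g -> m \in msupp g ->
         ~~ mdivides (lm g') m)].

Definition vR0 (k : nat) : 'cV[int]_(ncols k) :=
  \col_j (if ((k <= j)%N && (j < 2 * k)%N) then 1
          else if ((3 * k <= j)%N && (j < 4 * k)%N) then -1
          else if (nat_of_ord j == 4 * k)%N then 1
          else if (nat_of_ord j == (4 * k).+1)%N then -1
          else 0).
Definition vRe (k : nat) (i : 'I_k) : 'cV[int]_(ncols k) :=
  \col_j (if (nat_of_ord j == i)%N then 1 else if (nat_of_ord j == k + i)%N then -1 else 0).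
Definition vRf (k : nat) (i : 'I_k) : 'cV[int]_(ncols k) :=
  \col_j (if (nat_of_ord j == 2 * k + i)%N then 1 else if (nat_of_ord j == 3 * k + i)%N then -1 else 0).

Definition Rset (k : nat) : seq 'cV[int]_(ncols k) :=
  vR0 k :: [seq vRe i | i <- enum 'I_k] ++ [seq vRf i | i <- enum 'I_k].

From HB Require Import structures.
From mathcomp Require Import all_boot all_order all_algebra.
From mathcomp Require Import mpoly zify.
Set Implicit Arguments. Unset Strict Implicit. Unset Printing Implicit Defensive.
Import Order.TTheory GRing.Theory Num.Theory.
Local Open Scope ring_scope.

(* Name the variables x_1..x_k, y_1..y_k, z_1..z_k, w_1..w_k, s, t, so that the
   A_k-degree of a monomial records the exponent sums x_i + y_i - s,
   z_i + w_i - t and s + t.  A map [nf] on monomials that is constant on the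
   fibres of the A_k-degree and lex-nonincreasing never fixes the leading
   monomial of a nonzero element of I_A: the sum of the coefficients over the
   fibre of that monomial is a linear form vanishing on I_A but equal to the
   leading coefficient.  Such a map is obtained by trading each x_i for y_i,
   each z_i for w_i, and then y_1...y_k s for w_1...w_k t as often as
   possible; it fixes every monomial divisible by none of the leading
   monomials x_i, z_i, y_1...y_k s of the proposed basis.  Reducedness holds
   because each of these leading monomials contains a variable occurring in
   no other generator. *)

Section LexOrder.
Variable n : nat.
Implicit Types m : 'X_{1..n}.

Definition lexle m m' := (m == m') || lexlt m m'.

Lemma lexltP m m' : reflect (exists i : 'I_n, (m i < m' i)%N /\
   forall j : 'I_n, (j < i)%N -> m j = m' j) (lexlt m m').
Proof.
apply: (iffP existsP) => [[i /andP[lt /forallP H]]|[i [lt H]]]; exists i.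
  by split=> // j ji; apply/eqP/(implyP (H j) ji).
by rewrite lt /=; apply/forallP=> j; apply/implyP=> ji; rewrite H.
Qed.

Lemma lexltxx m : lexlt m m = false.
Proof. by apply/lexltP=> -[i [lt _]]; rewrite ltnn in lt. Qed.

Lemma lexlt_trans m1 m2 m3 : lexlt m1 m2 -> lexlt m2 m3 -> lexlt m1 m3.
Proof.
move=> /lexltP[i [lt1 H1]] /lexltP[j [lt2 H2]]; apply/lexltP.
case: (ltngtP i j) => [ij|ji|/val_inj eij].
- exists i; split=> [|l li]; first by rewrite -(H2 i ij).
  by rewrite H1 // H2 // (ltn_trans li ij).
- exists j; split=> [|l lj]; first by rewrite H1.
  by rewrite H1 ?H2 // (ltn_trans lj ji).
- subst j; exists i; split=> [|l li]; first exact: ltn_trans lt2.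
  by rewrite H1 ?H2.
Qed.

Lemma lexle_lt_trans m1 m2 m3 : lexle m1 m2 -> lexlt m2 m3 -> lexlt m1 m3.
Proof. by case/orP=> [/eqP->|/lexlt_trans]; apply. Qed.

Lemma lexlt_total m m' : m != m' -> lexlt m m' || lexlt m' m.
Proof.
move=> ne; have [|/existsPn same] := boolP [exists j, m j != m' j]; last first.
  by case/eqP: ne; apply/mnmP => j; apply/eqP; move: (same j); rewrite negbK.
case/existsP=> j0 /(@arg_minnP _ j0 (fun j => m j != m' j) val) [j neq min].
have agree (l : 'I_n) : (l < j)%N -> m l = m' l.
  by move=> lj; apply/eqP/negbNE/negP=> /min; rewrite leqNgt lj.
case: (ltngtP (m j) (m' j)) neq => // lt _.
  by apply/orP; left; apply/lexltP; exists j.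
by apply/orP; right; apply/lexltP; exists j; split=> // l /agree.
Qed.

Lemma lexle_trans m1 m2 m3 : lexle m1 m2 -> lexle m2 m3 -> lexle m1 m3.
Proof.
case/orP=> [/eqP-> //|lt12] /orP[/eqP<-|lt23]; rewrite /lexle ?lt12 ?orbT //.
by rewrite (lexlt_trans lt12 lt23) orbT.
Qed.

Lemma lexle_anti m m' : lexle m m' -> lexle m' m -> m = m'.
Proof.
case/orP=> [/eqP //|lt] /orP[/eqP //|lt'].
by move: (lexlt_trans lt lt'); rewrite lexltxx.
Qed.

Lemma lexlt_block m' m (c l : nat) :
  (forall j : 'I_n, (j < c)%N -> m' j = m j) ->
  (forall j : 'I_n, (c <= j < c + l)%N -> m' j = 0%N) ->
  (exists j : 'I_n, (c <= j < c + l)%N && (m j != 0%N)) -> lexlt m' m.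
Proof.
move=> below block [j1 j1P].
case: (@arg_minnP _ j1 (fun j : 'I_n => (c <= j < c + l)%N && (m j != 0%N)) val j1P)
  => j /andP[jc nz] min.
apply/lexltP; exists j; split; first by rewrite block // lt0n.
move=> i ij; case: (ltnP i c) => [/below //|ci].
have ib : (c <= i < c + l)%N by rewrite ci (ltn_trans ij) ?(andP jc).2.
rewrite block //; apply/esym/eqP; apply: contraT => nzi.
by move: (min i); rewrite ib nzi leqNgt ij => /(_ isT).
Qed.

Lemma lexle_maxl m m' : lexle m (lexmax m m').
Proof. by rewrite /lexle /lexmax; case: ifP => [->|_]; rewrite ?eqxx ?orbT. Qed.

Lemma lexle_maxr m m' : lexle m' (lexmax m m').
Proof.
rewrite /lexle /lexmax; case: ifP => [_|ge]; first by rewrite eqxx.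
by case: (eqVneq m' m) => //= /lexlt_total; rewrite ge orbF.
Qed.

Lemma foldr_lexmax_ge (s : seq 'X_{1..n}) m :
  m \in s -> lexle m (foldr (@lexmax n) 0%MM s).
Proof.
elim: s => //= m' s IH; rewrite in_cons => /orP[/eqP->|/IH le_m].
  exact: lexle_maxl.
exact: lexle_trans le_m (lexle_maxr _ _).
Qed.

Lemma foldr_lexmax_mem (s : seq 'X_{1..n}) :
  s != [::] -> foldr (@lexmax n) 0%MM s \in s.
Proof.
elim: s => //= m s IH _; rewrite /lexmax in_cons; case: ifP => [lt|_].
  by case: s IH lt => [_ /lexltP[i []]|m' s /(_ isT) ->]; rewrite ?mnm0E ?orbT.
by rewrite eqxx.
Qed.

Variable K : fieldType.
Implicit Types p : {mpoly K[n]}.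

Lemma lm_msupp p : p != 0 -> lm p \in msupp p.
Proof. by rewrite -msupp_eq0; apply: foldr_lexmax_mem. Qed.

Lemma lexle_lm p m : m \in msupp p -> lexle m (lm p).
Proof. exact: foldr_lexmax_ge. Qed.

Lemma lm_uniq p m :
  m \in msupp p -> (forall m', m' \in msupp p -> lexle m' m) -> lm p = m.
Proof.
move=> supp_m max_m; have p0 : p != 0 by apply: contraTneq supp_m => ->; rewrite msupp0.
by apply: lexle_anti; [apply/max_m/lm_msupp | apply: lexle_lm].
Qed.

End LexOrder.

Section Binomials.
Variables (K : fieldType) (n : nat).
Implicit Types (u : 'cV[int]_n) (m : 'X_{1..n}).

Definition expvec m : 'cV[int]_n := \col_i (m i)%:Z.

Lemma expvecD m1 m2 : expvec (m1 + m2)%MM = expvec m1 + expvec m2.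
Proof. by apply/matrixP => i j; rewrite !mxE mnmDE PoszD. Qed.

Lemma expvec_upos_uneg u : expvec (upos u) - expvec (uneg u) = u.
Proof.
apply/matrixP => i j; rewrite ord1 !mxE !mnmE.
by case: (u i 0) => [[|a]|a]; rewrite //= ?subr0 ?NegzE ?sub0r.
Qed.

Lemma upos_neq_uneg u : lexlt (uneg u) (upos u) -> upos u != uneg u.
Proof. by apply: contraTneq => ->; rewrite lexltxx. Qed.

Lemma mcoeff_binom u m :
  (binom K u)@_m = (upos u == m)%:R - (uneg u == m)%:R.
Proof. by rewrite /binom mcoeffB !mcoeffX. Qed.

Lemma msupp_binom u m : m \in msupp (binom K u) -> m = upos u \/ m = uneg u.
Proof.
rewrite mcoeff_msupp mcoeff_binom.
case: (eqVneq (upos u) m) => [-> _|_]; first by left.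
by case: (eqVneq (uneg u) m) => [-> _|_]; [right | rewrite subrr eqxx].
Qed.

Lemma binom_lex u : lexlt (uneg u) (upos u) ->
  [/\ lm (binom K u) = upos u, (binom K u)@_(upos u) = 1 & binom K u != 0].
Proof.
move=> lt; have coef1 : (binom K u)@_(upos u) = 1.
  by rewrite mcoeff_binom eqxx eq_sym (negbTE (upos_neq_uneg lt)) subr0.
have supp : upos u \in msupp (binom K u) by rewrite mcoeff_msupp coef1 oner_neq0.
split=> //; last by apply: contraTneq supp => ->; rewrite msupp0.
by apply: lm_uniq => // m /msupp_binom[->|->]; rewrite /lexle ?eqxx ?lt ?orbT.
Qed.

Lemma lexlt_uneg_upos u (j : 'I_n) :
  (forall i : 'I_n, (i < j)%N -> u i ord0 = 0) -> 0 < u j ord0 ->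
  lexlt (uneg u) (upos u).
Proof.
move=> before pos; apply/lexltP; exists j; split=> [|i /before ui0].
  by rewrite !mnmE (ltW pos) leNgt pos absz_gt0 gt_eqF.
by rewrite !mnmE ui0.
Qed.

Lemma upos_not_mdivides u m (j : 'I_n) :
  0 < u j ord0 -> m j = 0%N -> ~~ mdivides (upos u) m.
Proof.
move=> pos mj0; apply/forallPn; exists j.
by rewrite mnmE (ltW pos) mj0 -ltnNge absz_gt0 gt_eqF.
Qed.

Lemma not_mdivides_upos u m :
  ~~ mdivides (upos u) m -> exists2 j, 0 < u j ord0 & (m j)%:Z < u j ord0.
Proof.
case/forallPn => j; rewrite mnmE -ltnNge; case: ifP => [u_ge0 lt|]; last by rewrite ltn0.
have pos : 0 < u j ord0.
  by rewrite lt_def u_ge0 andbT -absz_eq0 -lt0n (leq_ltn_trans (leq0n _) lt).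
by exists j; rewrite // -(gtz0_abs pos) ltz_nat.
Qed.

End Binomials.

Section CoefSum.
Variables (K : fieldType) (n : nat) (P : pred 'X_{1..n}).
Implicit Types p h : {mpoly K[n]}.

Definition coef_sum p : K := \sum_(m <- msupp p | P m) p@_m.

Lemma coef_sumE p S : uniq S -> {subset msupp p <= S} ->
  coef_sum p = \sum_(m <- S | P m) p@_m.
Proof.
move=> uS sub; rewrite [RHS](bigID (mem (msupp p))) /=.
rewrite [X in _ + X]big1 ?addr0 => [|m /andP[_ /memN_msupp_eq0] //].
rewrite -(eq_bigl _ _ (fun m => andbC _ _)) -big_filter_cond /coef_sum.
apply/perm_big/uniq_perm; rewrite ?msupp_uniq ?filter_uniq // => m.
by rewrite mem_filter; case: (boolP (m \in msupp p)) => // /sub ->.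
Qed.

Lemma coef_sum_is_zmod_morphism : zmod_morphism coef_sum.
Proof.
move=> p q; have uS := undup_uniq (msupp p ++ msupp q).
rewrite (coef_sumE uS) ?(coef_sumE (p := p) uS) ?(coef_sumE (p := q) uS).
- by rewrite -sumrB; apply: eq_bigr => m _; rewrite mcoeffB.
- by move=> m mq; rewrite mem_undup mem_cat mq orbT.
- by move=> m mp; rewrite mem_undup mem_cat mp.
- by move=> m /msuppB_le; rewrite mem_undup.
Qed.

HB.instance Definition _ :=
  GRing.isZmodMorphism.Build {mpoly K[n]} K coef_sum coef_sum_is_zmod_morphism.

Lemma coef_sum_mulX h a :
  coef_sum (h * 'X_[a]) = \sum_(mu <- msupp h | P (a + mu)%MM) h@_mu.
Proof.
rewrite /coef_sum (perm_big _ (msuppMX h a)) big_map.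
by apply: eq_bigr => mu _; rewrite mcoeffMX.
Qed.

End CoefSum.

Section ToricNormalForm.
Variables (K : fieldType) (d n : nat) (A : 'M[int]_(d, n)).
Variable nf : 'X_{1..n} -> 'X_{1..n}.
Hypothesis nf_fiber : forall a b, A *m expvec a = A *m expvec b -> nf a = nf b.
Hypothesis nf_lexle : forall m, lexle (nf m) m.

Lemma nf_translate (u : 'cV[int]_n) mu : A *m u = 0 ->
  nf (upos u + mu)%MM = nf (uneg u + mu)%MM.
Proof.
move=> Au0; apply: nf_fiber; rewrite !expvecD !mulmxDr; congr (_ + _).
by apply/eqP; rewrite -subr_eq0 -mulmxBr expvec_upos_uneg Au0.
Qed.

Lemma toric_lm_not_fixed (f : {mpoly K[n]}) :
  toric_ideal A f -> f != 0 -> nf (lm f) != lm f.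
Proof.
move=> [s [ker fE]] f0; apply/eqP => fixed; set m := lm f in fixed.
pose P a := nf a == m.
have coef_sum_lm : coef_sum P f = f@_m.
  rewrite /coef_sum big_mkcond (bigD1_seq m) ?msupp_uniq ?lm_msupp //=.
  rewrite /P fixed eqxx big1_seq ?addr0 // => a /andP[am supp_a].
  case: eqP => // nfa.
  have lt_am : lexlt a m.
    by case/orP: (lexle_lm supp_a) am => [/eqP->|//]; rewrite eqxx.
  by move: (lexle_lt_trans (nf_lexle a) lt_am); rewrite nfa lexltxx.
have coef_sum0 : coef_sum P f = 0.
  rewrite fE raddf_sum big1_seq // => -[h u] /ker /= Au0.
  rewrite /binom mulrBr raddfB /= !coef_sum_mulX; apply/eqP; rewrite subr_eq0.
  by apply/eqP/eq_bigl => mu; rewrite /P nf_translate.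
by move: (lm_msupp f0); rewrite mcoeff_msupp -coef_sum_lm coef_sum0 eqxx.
Qed.

End ToricNormalForm.

Section Ak.
Variables (k : nat) (k_gt0 : (0 < k)%N).
Local Notation N := (ncols k).
Local Notation col c := (inord c : 'I_N).
Local Notation row r := (inord r : 'I_(2 * k).+1).
Implicit Types (m a b : 'X_{1..N}).

Lemma modn_eq_small j i : (i < k)%N -> (j < 4 * k)%N ->
  (j %% k == i)%N = [|| j == i, j == k + i, j == 2 * k + i | j == 3 * k + i]%N.
Proof.
move=> ik jk; have := divn_eq j k; have := ltn_pmod j k_gt0.
have : (j %/ k < 4)%N by rewrite ltn_divLR //; lia.
move: (j %/ k)%N (j %% k)%N => q r q4 rk ->.
by case: q q4 => [|[|[|[|q]]]] //= _; apply/idP/idP; lia.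
Qed.

Ltac decide_ifs := repeat case: ifP; lia.
Ltac decide_entries :=
  rewrite !mxE ?inordK /ncols;
  repeat match goal with i : 'I_k |- _ => move: (ltn_ord i); generalize dependent i end;
  intros; decide_ifs.

Lemma Amat_row_x r (j : 'I_N) : (r < k)%N ->
  Amat k (row r) j = (j == r :> nat)%:R + (j == k + r :> nat)%:R - (j == 4 * k :> nat)%:R.
Proof.
move=> rk; have := ltn_ord j; rewrite mxE inordK /ncols; last lia.
by case: ifP => j4; rewrite ?modn_eq_small //; decide_ifs.
Qed.

Lemma Amat_row_z i (j : 'I_N) : (i < k)%N ->
  Amat k (row (k + i)) j =
  (j == 2 * k + i :> nat)%:R + (j == 3 * k + i :> nat)%:R - (j == (4 * k).+1 :> nat)%:R.
Proof.
move=> ik; have := ltn_ord j; rewrite mxE inordK /ncols; last lia.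
by case: ifP => j4; rewrite ?(@modn_eq_small _ (k + i - k)); decide_ifs.
Qed.

Lemma Amat_row_e (j : 'I_N) :
  Amat k (row (2 * k)) j = (j == 4 * k :> nat)%:R + (j == (4 * k).+1 :> nat)%:R.
Proof.
by have := ltn_ord j; rewrite mxE inordK /ncols //; decide_ifs.
Qed.

Lemma sum_delta (F : 'I_N -> int) c : (c < N)%N ->
  \sum_(j : 'I_N) (j == c :> nat)%:R * F j = F (col c).
Proof.
move=> cN; rewrite (bigD1 (col c)) //= inordK // eqxx mul1r big1 ?addr0 // => j.
by rewrite -val_eqE /= inordK // => /negbTE->; rewrite mul0r.
Qed.

Lemma Amat_mul_x (v : 'cV[int]_N) r : (r < k)%N ->
  (Amat k *m v) (row r) ord0 = v (col r) ord0 + v (col (k + r)) ord0 - v (col (4 * k)) ord0.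
Proof.
move=> rk; rewrite mxE; under eq_bigr do rewrite Amat_row_x // mulrBl mulrDl.
by rewrite sumrB big_split /= !sum_delta /ncols //; lia.
Qed.

Lemma Amat_mul_z (v : 'cV[int]_N) i : (i < k)%N ->
  (Amat k *m v) (row (k + i)) ord0 =
  v (col (2 * k + i)) ord0 + v (col (3 * k + i)) ord0 - v (col (4 * k).+1) ord0.
Proof.
move=> ik; rewrite mxE; under eq_bigr do rewrite Amat_row_z // mulrBl mulrDl.
by rewrite sumrB big_split /= !sum_delta /ncols //; lia.
Qed.

Lemma Amat_mul_e (v : 'cV[int]_N) :
  (Amat k *m v) (row (2 * k)) ord0 = v (col (4 * k)) ord0 + v (col (4 * k).+1) ord0.
Proof.
rewrite mxE; under eq_bigr do rewrite Amat_row_e mulrDl.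
by rewrite big_split /= !sum_delta /ncols.
Qed.

Lemma RsetP u :
  u \in Rset k -> [\/ u = vR0 k, exists i, u = vRe i | exists i, u = vRf i].
Proof.
rewrite /Rset in_cons mem_cat => /orP[/eqP->|/orP[/mapP[i _ ->]|/mapP[i _ ->]]].
- exact: Or31.
- by apply: Or32; exists i.
- by apply: Or33; exists i.
Qed.

Lemma vR0_Rset : vR0 k \in Rset k.
Proof. by rewrite /Rset in_cons eqxx. Qed.

Lemma vRe_Rset i : vRe i \in Rset k.
Proof. by rewrite /Rset in_cons mem_cat (map_f (@vRe k)) ?mem_enum ?orbT. Qed.

Lemma vRf_Rset i : vRf i \in Rset k.
Proof. by rewrite /Rset in_cons mem_cat (map_f (@vRf k)) ?mem_enum ?orbT. Qed.

Ltac Rset_entries uR := case/RsetP: uR => [->|[? ->]|[? ->]]; decide_entries.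

Lemma Rset_ker u : u \in Rset k -> Amat k *m u = 0.
Proof.
move=> uR; apply/matrixP => r c; rewrite [c]ord1 [RHS]mxE -[r]inord_val.
have rN := ltn_ord r; have [rk|kr] := ltnP r k.
  by rewrite Amat_mul_x //; Rset_entries uR.
have [r2k|r2] := ltnP r (2 * k).
  have -> : nat_of_ord r = (k + (r - k))%N by lia.
  by rewrite Amat_mul_z //; [Rset_entries uR | lia].
have -> : nat_of_ord r = (2 * k)%N by lia.
by rewrite Amat_mul_e //; Rset_entries uR.
Qed.

Lemma Rset_lex u : u \in Rset k -> lexlt (uneg u) (upos u).
Proof.
case/RsetP=> [->|[i ->]|[i ->]].
- by apply: (@lexlt_uneg_upos _ _ (col k)) => [j|]; decide_entries.
- by apply: (@lexlt_uneg_upos _ _ (col i)) => [j|]; decide_entries.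
- by apply: (@lexlt_uneg_upos _ _ (col (2 * k + i))) => [j|]; decide_entries.
Qed.

Lemma Rset_pivot u' : u' \in Rset k -> exists j : 'I_N,
  0 < u' j ord0 /\ {in Rset k, forall u, u != u' -> u j ord0 = 0}.
Proof.
have ne_idx (f : 'I_k -> 'cV[int]_N) i i' : f i != f i' -> (i != i' :> nat).
  by apply: contraNneq => /val_inj->.
case/RsetP=> [->|[i' ->]|[i' ->]];
  [exists (col (4 * k)) | exists (col i') | exists (col (2 * k + i'))];
  (split; [|move=> u /RsetP[->|[i ->]|[i ->]] neq;
             rewrite ?eqxx // in neq; try move/ne_idx: neq]); decide_entries.
Qed.

Definition mexp m c := m (col c).
Definition xy_deg m i := (mexp m i + mexp m (k + i))%N.
Definition zw_deg m i := (mexp m (2 * k + i) + mexp m (3 * k + i))%N.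
Definition s_deg m := mexp m (4 * k).
Definition t_deg m := mexp m (4 * k).+1.
Definition nf_s m := (\max_(i < k) (s_deg m - xy_deg m i))%N.

(* [s_deg m - nf_s m = min(s, min_i (x_i + y_i))] is the number of trades of
   y_1...y_k s for w_1...w_k t, made after moving x onto y and z onto w. *)
Definition toric_nf m : 'X_{1..N} :=
  [multinom if (j < k)%N then 0%N
            else if (j < 2 * k)%N then (xy_deg m (j - k) + nf_s m - s_deg m)%N
            else if (j < 3 * k)%N then 0%N
            else if (j < 4 * k)%N then (zw_deg m (j - 3 * k) + (s_deg m - nf_s m))%N
            else if (j == 4 * k :> nat) then nf_s m
            else (t_deg m + (s_deg m - nf_s m))%N | j < N].

Lemma mexp_ord m (j : 'I_N) : mexp m j = m j.
Proof. by rewrite /mexp inord_val. Qed.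

Lemma nf_s_le m : (nf_s m <= s_deg m)%N.
Proof. by apply/bigmax_leqP => i _; apply: leq_subr. Qed.

Lemma nf_s_ge m i : (i < k)%N -> (s_deg m - xy_deg m i <= nf_s m)%N.
Proof.
by move=> ik; apply: (leq_bigmax (F := fun i : 'I_k => s_deg m - xy_deg m i)%N (Ordinal ik)).
Qed.

Lemma same_Adeg a b : Amat k *m expvec a = Amat k *m expvec b ->
  [/\ forall i, (i < k)%N -> (xy_deg a i + s_deg b = xy_deg b i + s_deg a)%N,
      forall i, (i < k)%N -> (zw_deg a i + t_deg b = zw_deg b i + t_deg a)%N &
      (s_deg a + t_deg a = s_deg b + t_deg b)%N].
Proof.
move=> Adeg; have entry r := congr1 (fun M : 'M[int]_((2 * k).+1, 1) => M (row r) ord0) Adeg.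
rewrite /xy_deg /zw_deg /s_deg /t_deg /mexp; split=> [i ik|i ik|].
- by move: (entry i); rewrite !Amat_mul_x // !mxE; lia.
- by move: (entry (k + i)%N); rewrite !Amat_mul_z // !mxE; lia.
- by move: (entry (2 * k)%N); rewrite !Amat_mul_e // !mxE; lia.
Qed.

Lemma toric_nf_fiber a b :
  Amat k *m expvec a = Amat k *m expvec b -> toric_nf a = toric_nf b.
Proof.
case/same_Adeg=> Exy Ezw Est.
have nf_sE : nf_s a = nf_s b by apply: eq_bigr => i _; move: (Exy i (ltn_ord i)); lia.
move: (nf_s_le a) (nf_s_le b) => le_a le_b.
apply/mnmP => j; rewrite !mnmE nf_sE.
case: ifP => // j1; case: ifP => j2; first by move: (Exy (j - k)%N); lia.
case: ifP => // j3; case: ifP => j4; first by move: (Ezw (j - 3 * k)%N); lia.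
by case: ifP => _; lia.
Qed.

Lemma toric_nf_id m :
  (forall i, (i < k)%N -> mexp m i = 0%N) ->
  (forall i, (i < k)%N -> mexp m (2 * k + i) = 0%N) ->
  nf_s m = s_deg m -> toric_nf m = m.
Proof.
move=> x0 z0 nf_sE; apply/mnmP => j; rewrite mnmE -mexp_ord nf_sE subnn !addn0.
have jN : (j < (4 * k).+2)%N := ltn_ord j.
case: ifP => j1; first by rewrite x0.
case: ifP => j2.
  rewrite addnK /xy_deg x0 ?add0n; last lia.
  by congr mexp; lia.
case: ifP => j3; first by rewrite -(z0 (j - 2 * k)%N); [congr mexp | ]; lia.
case: ifP => j4.
  rewrite /zw_deg z0 ?add0n; last lia.
  by congr mexp; lia.
case: ifP => [/eqP->|j5]; first by [].
by rewrite /t_deg; congr mexp; lia.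
Qed.

Lemma block_nonzero_or_zero m c : (c + k <= N)%N ->
  (exists j : 'I_N, (c <= j < c + k)%N && (m j != 0%N)) \/
  (forall i, (i < k)%N -> mexp m (c + i) = 0%N).
Proof.
move=> cN; case: (boolP [exists j : 'I_N, (c <= j < c + k)%N && (m j != 0%N)]).
  by case/existsP=> j jP; left; exists j.
move/existsPn=> none; right=> i ik; apply/eqP; move: (none (col (c + i))).
by rewrite inordK ?leq_addr ?ltn_add2l ?ik ?negbK //; apply: leq_trans cN; rewrite ltn_add2l.
Qed.

Lemma toric_nf_lexle m : lexle (toric_nf m) m.
Proof.
have x_block : (0 + k <= N)%N by rewrite /ncols; lia.
have z_block : (2 * k + k <= N)%N by rewrite /ncols; lia.
have [xnz|x0] := block_nonzero_or_zero m x_block.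
  apply/orP; right; apply: (@lexlt_block _ _ _ 0 k) => // j /andP[_ jk].
  by rewrite mnmE jk.
have {}x0 : forall i, (i < k)%N -> mexp m i = 0%N := x0.
have [lt_s|ge_s] := ltnP (nf_s m) (s_deg m).
  apply/orP; right; apply/lexltP; exists (col k); split=> [|j jk].
    have := nf_s_ge m k_gt0; rewrite mnmE inordK /ncols; last lia.
    rewrite ltnn (_ : k < 2 * k = true)%N; last lia.
    by change (m (col k)) with (mexp m k); rewrite subnn /xy_deg x0 // !add0n addn0; lia.
  rewrite inordK /ncols in jk; last lia.
  by rewrite mnmE jk -mexp_ord x0.
have nf_sE : nf_s m = s_deg m by apply/eqP; rewrite eqn_leq nf_s_le.
have [znz|z0] := block_nonzero_or_zero m z_block; last by rewrite toric_nf_id ?/lexle ?eqxx.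
apply/orP; right; apply: (@lexlt_block _ _ _ (2 * k) k) => // j jb;
  rewrite mnmE; last by repeat case: ifP; lia.
case: ifP => j1; first by rewrite -mexp_ord x0.
rewrite ifT; last lia.
rewrite nf_sE addnK /xy_deg x0 ?add0n -?mexp_ord; last lia.
by congr mexp; lia.
Qed.

Lemma not_mdivides_vRe m i : ~~ mdivides (upos (vRe i)) m -> mexp m i = 0%N.
Proof.
case/not_mdivides_upos=> j; rewrite !mxE => pos lt.
have jE : nat_of_ord j = i by move: pos; decide_ifs.
by move: lt; rewrite /mexp -jE inord_val jE eqxx; lia.
Qed.

Lemma not_mdivides_vRf m i : ~~ mdivides (upos (vRf i)) m -> mexp m (2 * k + i) = 0%N.
Proof.
case/not_mdivides_upos=> j; rewrite !mxE => pos lt.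
have jE : nat_of_ord j = (2 * k + i)%N by move: pos; decide_ifs.
by move: lt; rewrite /mexp -jE inord_val jE eqxx; lia.
Qed.

Lemma not_mdivides_vR0 m : (forall i, (i < k)%N -> mexp m i = 0%N) ->
  ~~ mdivides (upos (vR0 k)) m -> nf_s m = s_deg m.
Proof.
move=> x0 /not_mdivides_upos[j]; rewrite !mxE => pos lt.
apply/eqP; rewrite eqn_leq nf_s_le /=; have jN : (j < (4 * k).+2)%N := ltn_ord j.
have [jy|js] : (k <= j < 2 * k)%N \/ nat_of_ord j = (4 * k)%N by move: pos; decide_ifs.
  have mj0 : mexp m (k + (j - k)) = 0%N.
    by rewrite subnKC ?(andP jy).1 // mexp_ord; move: lt; rewrite jy; lia.
  have jk : (j - k < k)%N by lia.
  by apply: leq_trans (nf_s_ge m jk); rewrite /xy_deg x0 // mj0 subn0.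
have -> : s_deg m = 0%N by rewrite /s_deg -js mexp_ord; move: lt; rewrite js; decide_ifs.
exact: leq0n.
Qed.

Lemma toric_nf_standard m :
  (forall u, u \in Rset k -> ~~ mdivides (upos u) m) -> toric_nf m = m.
Proof.
move=> nd; have x0 i (ik : (i < k)%N) := not_mdivides_vRe (nd _ (vRe_Rset (Ordinal ik))).
have z0 i (ik : (i < k)%N) := not_mdivides_vRf (nd _ (vRf_Rset (Ordinal ik))).
exact: toric_nf_id x0 z0 (not_mdivides_vR0 x0 (nd _ vR0_Rset)).
Qed.

End Ak.

Theorem theorem3 (K : fieldType) (k : nat) (hk : (1 <= k)%N) :
  is_reduced_lex_GB (@toric_ideal K _ _ (Amat k))
    [seq @binom K _ u | u <- Rset k].
Proof.
have lm_R u (uR : u \in Rset k) := binom_lex K (Rset_lex hk uR).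
split.
- move=> _ /mapP[u uR ->]; exists [:: (1, u)]; split.
    by move=> p; rewrite inE => /eqP->; apply: Rset_ker.
  by rewrite big_seq1 mul1r.
- move=> f If f0.
  have [/hasP[g gG div]|/hasPn none] :=
    boolP (has (fun g => mdivides (lm g) (lm f)) [seq binom K u | u <- Rset k]).
    by exists g.
  case/negP: (toric_lm_not_fixed (toric_nf_fiber hk) (toric_nf_lexle hk) If f0).
  apply/eqP/toric_nf_standard => // u uR.
  by move: (none _ (map_f (@binom K _) uR)); case: (lm_R u uR) => ->.
- by move=> _ /mapP[u uR ->]; case: (lm_R u uR) => -> -> ->.
- move=> _ _ m /mapP[u uR ->] /mapP[u' uR' ->] neq supp.
  case: (lm_R u' uR') => -> _ _; have [j [pos zero]] := Rset_pivot hk uR'.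
  have uj0 : u j ord0 = 0 by apply: zero => //; apply: contraNneq neq => ->.
  by apply: (upos_not_mdivides pos); case/msupp_binom: supp => ->; rewrite mnmE uj0.
Qed.
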